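(* Let $W_2\in\{M_2,S_2\}$ and let $\phi:W_{2}\rightarrow W_{2}$ be a linear map that preserves the L-spectrum, i.e. $\sigma_{\mathcal{K}}(\phi(A))=\sigma_{\mathcal{K}}(A)$ for all $A\in W_2$. Then \[ \phi(E_{11})= \begin{bmatrix} 1-a & \mp\sqrt{a^{2}-a}\\ \pm\sqrt{a^{2}-a} & a \end{bmatrix},\quad \phi(E_{22})= \begin{bmatrix} a & \pm\sqrt{a^{2}-a}\\ \mp\sqrt{a^{2}-a} & 1-a \end{bmatrix} \] for some $a\leq 0$, and \[ \phi(E_{12}+E_{21})= \begin{bmatrix} m & r\\ -r\pm 2 & -m \end{bmatrix} \] for some $m,r\in\mathbb{R}$. In particular, if $W_{2}=S_{2}$, then $\phi(E_{11})=E_{11}$, $\phi(E_{22})=E_{22}$, and \[ \phi(E_{12}+E_{21})= \begin{bmatrix} m & r\\ r & -m \end{bmatrix} \] for some $m\in\mathbb{R}$ and $r\in\{-1,1\}$.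
   Context: $M_2$ is the space of $2\times 2$ real matrices and $S_2$ its subspace of symmetric matrices. The Lorentz cone in $\mathbb{R}^2$ is $\mathcal{K}=\{(x_1,x_2)\in\mathbb{R}^2: |x_1|\le x_2\}$. For $A\in M_2$, a scalar $\lambda\in\mathbb{R}$ is a Lorentz eigenvalue (L-eigenvalue) of $A$ if there is a nonzero $x\in\mathbb{R}^2$ with $x\in\mathcal{K}$, $(A-\lambda I)x\in\mathcal{K}$ and $x^T(A-\lambda I)x=0$; the set of all L-eigenvalues of $A$ is the L-spectrum $\sigma_{\mathcal{K}}(A)$. For $i,j\in\{1,2\}$, $E_{ij}$ denotes the $2\times 2$ matrix whose only nonzero entry is a $1$ in position $(i,j)$. The signs $\pm,\mp$ in $\phi(E_{11})$ and $\phi(E_{22})$ are chosen consistently (upper signs together or lower signs together). *)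

From HB Require Import structures.
From mathcomp Require Import all_boot all_order all_algebra.
From mathcomp Require Import reals.
Set Implicit Arguments. Unset Strict Implicit. Unset Printing Implicit Defensive.
Import Order.TTheory GRing.Theory Num.Theory.
Local Open Scope ring_scope.

Definition lorentz (R : realType) (x : 'cV[R]_2) : Prop :=
  `|x ord0 ord0| <= x ord_max ord0.

Definition Leig (R : realType) (A : 'M[R]_2) (l : R) : Prop :=
  exists x : 'cV[R]_2, [/\ x != 0, lorentz x,
     lorentz ((A - l%:M) *m x) & x^T *m (A - l%:M) *m x = 0].

Definition Lspectrum (R : realType) (A : 'M[R]_2) : R -> Prop := Leig A.

Definition E (R : realType) (i j : 'I_2) : 'M[R]_2 := delta_mx i j.

Definition mx2 (R : realType) (a b c d : R) : 'M[R]_2 :=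
  \matrix_(i < 2, j < 2)
    if (i == ord0) then (if (j == ord0) then a else b)
    else (if (j == ord0) then c else d).

(* the domain W_2: all of M_2 (sym = false) or S_2 (sym = true) *)
Definition inW (R : realType) (sym : bool) (A : 'M[R]_2) : Prop :=
  sym -> A^T = A.

From HB Require Import structures.
From mathcomp Require Import all_boot all_order all_algebra.
From mathcomp Require Import reals ring lra.
Import Order.TTheory GRing.Theory Num.Theory.
Local Open Scope ring_scope.

(* An L-eigenvalue l of a 2x2 matrix B with witness x comes in one of two kinds:
   either (B - l) x = 0, so l is an ordinary eigenvalue, or x and (B - l) x are
   nonzero orthogonal vectors of the Lorentz cone, hence lie on its two boundary
   rays (e, 1) and (-e, 1), e = 1 or -1; then 2 l = (e, 1) B (e, 1)^T, and this
   value is an L-eigenvalue exactly when (-e, 1) B (e, 1)^T >= 0.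
   Put P, S, Q for the images of E11, E12 + E21, E22, so that the symmetric
   matrix A = [[x, y], [y, z]] is sent to x P + y S + z Q. The boundary values of
   phi(A) are linear in (x, y, z) and admissible on a half-space; they must be
   L-eigenvalues of A. For x > z, A has no admissible boundary value and its
   eigenvalues are not affine in y, so each half-space is {x <= z} and each
   boundary value is (x + z +- 2 y) / 2. The resulting linear conditions determine
   P and Q up to their entries a = P_22, c = P_12; the L-eigenvalue 1 of E22
   forces a^2 - a = c^2, and testing [[0, 1], [1, 1]] shows that S is not +-I. *)

Section TwoByTwo.
Set Implicit Arguments.
Unset Strict Implicit.
Variable R : realType.
Implicit Types (B C : 'M[R]_2) (a b c d x y z l e : R).

Lemma ord2P (i : 'I_2) : i = ord0 \/ i = ord_max.
Proof. by case: i => [[|[|n]]] Hi; [left; exact: val_inj|right; exact: val_inj|]. Qed.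

Lemma mx2P B a b c d : B ord0 ord0 = a -> B ord0 ord_max = b ->
  B ord_max ord0 = c -> B ord_max ord_max = d -> B = mx2 a b c d.
Proof.
move=> h00 h01 h10 h11; apply/matrixP => i j.
by case: (ord2P i) => ->; case: (ord2P j) => ->; rewrite !mxE.
Qed.

Lemma scale_mx2D k a b c d a' b' c' d' :
  k *: mx2 a b c d + mx2 a' b' c' d' =
  mx2 (k * a + a') (k * b + b') (k * c + c') (k * d + d').
Proof. by apply: mx2P; rewrite !mxE. Qed.

Lemma mx2_sym x y z : (mx2 x y y z)^T = mx2 x y y z.
Proof. by apply: mx2P; rewrite !mxE. Qed.

Lemma inW_mx2 (sym : bool) x y z : inW sym (mx2 x y y z).
Proof. by move=> _; exact: mx2_sym. Qed.

Lemma linear_mx2_sym (sym : bool) (phi : 'M[R]_2 -> 'M[R]_2) :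
  (forall (k : R) A B, inW sym A -> inW sym B -> phi (k *: A + B) = k *: phi A + phi B) ->
  forall x y z, phi (mx2 x y y z) =
    x *: phi (mx2 1 0 0 0) + y *: phi (mx2 0 1 1 0) + z *: phi (mx2 0 0 0 1).
Proof.
move=> phi_lin x y z.
have lin k (a b d a' b' d' : R) : phi (k *: mx2 a b b d + mx2 a' b' b' d') =
    k *: phi (mx2 a b b d) + phi (mx2 a' b' b' d').
  by apply: phi_lin; apply: inW_mx2.
have phi0 : phi (mx2 0 0 0 0) = 0.
  have e0 : mx2 0 0 0 0 = (-1) *: mx2 0 0 0 0 + mx2 (0 : R) 0 0 0.
    by rewrite scale_mx2D; congr mx2; ring.
  by move: (congr1 phi e0); rewrite lin scaleN1r addNr.
have e1 : mx2 x y y z = x *: mx2 1 0 0 0 + mx2 0 y y z.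
  by rewrite scale_mx2D; congr mx2; ring.
have e2 : mx2 0 y y z = y *: mx2 0 1 1 0 + mx2 0 0 0 z.
  by rewrite scale_mx2D; congr mx2; ring.
have e3 : mx2 0 0 0 z = z *: mx2 0 0 0 1 + mx2 0 0 0 0.
  by rewrite scale_mx2D; congr mx2; ring.
by rewrite e1 lin e2 lin e3 lin phi0 addr0 addrA.
Qed.

Lemma E11_mx2 : E R ord0 ord0 = mx2 1 0 0 0.
Proof. by apply: mx2P; rewrite !mxE. Qed.

Lemma E22_mx2 : E R ord_max ord_max = mx2 0 0 0 1.
Proof. by apply: mx2P; rewrite !mxE. Qed.

Lemma E12_E21_mx2 : E R ord0 ord_max + E R ord_max ord0 = mx2 0 1 1 0.
Proof. by apply: mx2P; rewrite !mxE /= ?addr0 ?add0r. Qed.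

Lemma det2E C :
  \det C = C ord0 ord0 * C ord_max ord_max - C ord0 ord_max * C ord_max ord0.
Proof.
rewrite (expand_det_row C ord0) !big_ord_recl big_ord0 addr0 /cofactor.
rewrite !det_mx11 !mxE /=.
have -> : lift ord0 ord0 = ord_max :> 'I_2 by exact: val_inj.
have -> : lift ord_max ord0 = ord0 :> 'I_2 by exact: val_inj.
by rewrite !expr0 expr1 mul1r mulN1r mulrN.
Qed.

Definition col2 x1 x2 : 'cV[R]_2 := \col_i (if i == ord0 then x1 else x2).

Lemma col2E (v : 'cV[R]_2) : v = col2 (v ord0 ord0) (v ord_max ord0).
Proof.
by apply/matrixP => i j; rewrite (ord1 j) !mxE; case: (ord2P i) => ->.
Qed.

Lemma mulmx_col2 C x1 x2 : C *m col2 x1 x2 =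
  col2 (C ord0 ord0 * x1 + C ord0 ord_max * x2)
       (C ord_max ord0 * x1 + C ord_max ord_max * x2).
Proof.
apply/matrixP => i j; rewrite !mxE !big_ord_recl big_ord0 !mxE /=.
have -> : lift ord0 ord0 = ord_max :> 'I_2 by exact: val_inj.
by case: (ord2P i) => ->; rewrite addr0.
Qed.

Lemma tr_col2_mul x1 x2 y1 y2 :
  (col2 x1 x2)^T *m col2 y1 y2 = (x1 * y1 + x2 * y2)%:M.
Proof.
apply/matrixP => i j; rewrite (ord1 i) (ord1 j) !mxE !big_ord_recl big_ord0 !mxE /=.
by rewrite addr0.
Qed.

Lemma lorentz_col2 x1 x2 : lorentz (col2 x1 x2) = (`|x1| <= x2).
Proof. by rewrite /lorentz !mxE. Qed.

Definition Lcompl C := exists v : 'cV[R]_2,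
  [/\ v != 0, lorentz v, lorentz (C *m v) & v^T *m C *m v = 0].

Lemma LcomplP C : Lcompl C <-> exists x1 x2, [/\ 0 < x2, `|x1| <= x2,
  `|C ord0 ord0 * x1 + C ord0 ord_max * x2|
    <= C ord_max ord0 * x1 + C ord_max ord_max * x2
  & x1 * (C ord0 ord0 * x1 + C ord0 ord_max * x2)
    + x2 * (C ord_max ord0 * x1 + C ord_max ord_max * x2) = 0].
Proof.
split=> [[v []]|[x1 [x2 [x2_gt0 lx ly orth]]]].
  rewrite (col2E v) -mulmxA !mulmx_col2 tr_col2_mul !lorentz_col2.
  set x1 := v ord0 ord0; set x2 := v ord_max ord0 => v_neq0 lx ly.
  move/(congr1 (fun M : 'M[R]_1 => M ord0 ord0)); rewrite !mxE mulr1n => orth.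
  exists x1, x2; split=> //; rewrite lt_neqAle (le_trans (normr_ge0 _) lx) andbT.
  apply: contraNneq v_neq0 => /esym x2_0.
  have x1_0 : x1 = 0 by apply/normr0_eq0/eqP; rewrite eq_le normr_ge0 -x2_0 lx.
  by apply/eqP/matrixP => i j; rewrite !mxE; case: ifP; rewrite ?x1_0 ?x2_0.
exists (col2 x1 x2); rewrite -mulmxA !mulmx_col2 tr_col2_mul !lorentz_col2 orth raddf0.
split=> //.
apply: contraTneq x2_gt0 => /(congr1 (fun v : 'cV[R]_2 => v ord_max ord0)).
by rewrite !mxE /= => ->; rewrite ltxx.
Qed.

Lemma lorentz_orth_boundary x1 x2 y1 y2 : `|x1| <= x2 -> `|y1| <= y2 ->
  x1 * y1 + x2 * y2 = 0 -> 0 < x2 -> 0 < y2 ->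
  exists2 e, e = 1 \/ e = -1 & x1 = e * x2.
Proof.
move=> lx ly orth x2_gt0 y2_gt0.
have norm_x1 : `|x1| = x2.
  have prod : `|x1| * `|y1| = x2 * y2.
    by rewrite -normrM (_ : x1 * y1 = - (x2 * y2)) ?normrN ?ger0_norm ?mulr_ge0; lra.
  have := normr_ge0 x1; have := normr_ge0 y1; nra.
have [x1_ge0|x1_lt0] := lerP 0 x1.
- by exists 1; [left | rewrite mul1r -norm_x1 ger0_norm].
- by exists (-1); [right | rewrite mulN1r -norm_x1 ltr0_norm ?opprK].
Qed.

(* [bil C s t] is (s, 1) C (t, 1)^T; for s, t = 1 or -1 the vectors (s, 1)
   span the two boundary rays of the Lorentz cone. *)
Definition bil C s t :=
  s * t * C ord0 ord0 + s * C ord0 ord_max + t * C ord_max ord0 + C ord_max ord_max.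

Lemma Lcompl_cases C : Lcompl C ->
  \det C = 0 \/ exists2 e, e = 1 \/ e = -1 & bil C e e = 0 /\ 0 <= bil C (-e) e.
Proof.
move/LcomplP => [x1 [x2 [x2_gt0 lx ly orth]]].
set y1 := _ * x1 + _ * x2 in ly orth; set y2 := _ * x1 + _ * x2 in ly orth.
have [y2_le0|y2_gt0] := lerP y2 0.
  have y2_0 : y2 = 0 by have := normr_ge0 y1; lra.
  have y1_0 : y1 = 0 by apply/normr0_eq0; have := normr_ge0 y1; lra.
  have : \det C * x2 = C ord0 ord0 * y2 - C ord_max ord0 * y1.
    by rewrite det2E /y1 /y2; ring.
  rewrite y1_0 y2_0 !mulr0 subrr => /eqP; rewrite mulf_eq0 (gt_eqF x2_gt0) orbF.
  by move/eqP; left.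
right; have [e he x1E] := lorentz_orth_boundary lx ly orth x2_gt0 y2_gt0; exists e => //.
have bil0 : x2 ^+ 2 * bil C e e = 0 by rewrite -orth /y1 /y2 x1E /bil; ring.
have y2E : y2 = x2 * (e * C ord_max ord0 + C ord_max ord_max) by rewrite /y2 x1E; ring.
have bil_sum : bil C e e + bil C (-e) e = 2 * (e * C ord_max ord0 + C ord_max ord_max).
  by rewrite /bil; ring.
move: bil0 y2_gt0; rewrite y2E pmulr_rgt0 // => /eqP.
rewrite mulf_eq0 expf_eq0 (gt_eqF x2_gt0) andbF /= => /eqP bil0 y2_gt0; split=> //; lra.
Qed.

Lemma Lcompl_ray C e : e = 1 \/ e = -1 -> bil C e e = 0 -> 0 <= bil C (-e) e ->
  Lcompl C.
Proof.
move=> he bil0 bil_ge0; apply/LcomplP; exists e, 1; split; rewrite ?mulr1.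
- exact: ltr01.
- by case: he => ->; rewrite ?normrN normr1.
- move: bil0 bil_ge0; rewrite /bil ler_norml.
  by case: he => -> ? ?; apply/andP; split; lra.
- by rewrite -bil0 /bil; ring.
Qed.

Lemma LeigE B l : Leig B l = Lcompl (B - l%:M).
Proof. by []. Qed.

Lemma Leig_eigvec B l v : v != 0 -> lorentz v -> B *m v = l *: v -> Leig B l.
Proof.
move=> v_neq0 lv Bv.
have Cv0 : (B - l%:M) *m v = 0 by rewrite mulmxBl Bv mul_scalar_mx subrr.
by exists v; rewrite -mulmxA Cv0 mulmx0; split=> //; rewrite /lorentz !mxE normr0.
Qed.

Lemma bil_shift B l s t : bil (B - l%:M) s t = bil B s t - l * (s * t + 1).
Proof. by rewrite /bil !mxE /=; ring. Qed.

Lemma Leig_cases B l : Leig B l -> \det (B - l%:M) = 0 \/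
  exists2 e, e = 1 \/ e = -1 & 2 * l = bil B e e /\ 0 <= bil B (-e) e.
Proof.
rewrite LeigE => /Lcompl_cases [|[e he]]; [by left | rewrite !bil_shift => -[h1 h2]].
by right; exists e => //; case: he h1 h2 => -> h1 h2; lra.
Qed.

Lemma Leig_ray B e : e = 1 \/ e = -1 -> 0 <= bil B (-e) e -> Leig B (bil B e e / 2).
Proof.
move=> he bil_ge0; rewrite LeigE; apply: (Lcompl_ray he); rewrite bil_shift.
  by case: he => ->; lra.
by case: he bil_ge0 => -> ?; lra.
Qed.

Definition sym_cand x y z l := (x - l) * (z - l) = y ^+ 2 \/
  x <= z /\ (2 * l = x + 2 * y + z \/ 2 * l = x - 2 * y + z).

Lemma Leig_mx2_sym x y z l : Leig (mx2 x y y z) l -> sym_cand x y z l.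
Proof.
case/Leig_cases => [|[e he]]; rewrite ?det2E /bil !mxE /=.
  by rewrite mulr1n mulr0n subr0 => h; left; rewrite expr2; lra.
by case: he => -> [h1 h2]; right; split; lra.
Qed.

End TwoByTwo.

Section LinearCandidates.
Set Implicit Arguments.
Unset Strict Implicit.
Variable R : realType.
Implicit Types (a b c d x y z l : R).

Lemma quadratic_coef_eq0 c2 c1 c0 t1 t2 t3 : t1 != t2 -> t1 != t3 -> t2 != t3 ->
  c2 * t1 ^+ 2 + c1 * t1 + c0 = 0 -> c2 * t2 ^+ 2 + c1 * t2 + c0 = 0 ->
  c2 * t3 ^+ 2 + c1 * t3 + c0 = 0 -> [/\ c2 = 0, c1 = 0 & c0 = 0].
Proof.
move=> n12 n13 n23 e1 e2 e3.
have cancel (u v w : R) : u != v -> (u - v) * w = 0 -> w = 0.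
  by move=> nuv /eqP; rewrite mulf_eq0 subr_eq0 (negbTE nuv) => /eqP.
have slope (u v : R) : u != v -> c2 * u ^+ 2 + c1 * u + c0 = 0 ->
    c2 * v ^+ 2 + c1 * v + c0 = 0 -> c2 * (u + v) + c1 = 0.
  move=> nuv eu ev; apply: (cancel u v) => //.
  by rewrite -[RHS](subrr 0) -{1}eu -ev; ring.
have s12 := slope _ _ n12 e1 e2; have s13 := slope _ _ n13 e1 e3.
have c2_0 : c2 = 0.
  by apply: (cancel t2 t3) => //; rewrite -[RHS](subrr 0) -{1}s12 -s13; ring.
have c1_0 : c1 = 0 by move: s12; rewrite c2_0 mul0r add0r.
by split=> //; move: e1; rewrite c2_0 c1_0; lra.
Qed.

Lemma sym_eig_affine_roots x z a b t1 t2 t3 : x != z ->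
  t1 != t2 -> t1 != t3 -> t2 != t3 ->
  (x - (a + b * t1)) * (z - (a + b * t1)) = t1 ^+ 2 ->
  (x - (a + b * t2)) * (z - (a + b * t2)) = t2 ^+ 2 ->
  (x - (a + b * t3)) * (z - (a + b * t3)) = t3 ^+ 2 -> False.
Proof.
move=> nxz n12 n13 n23.
have coef (t : R) : (x - (a + b * t)) * (z - (a + b * t)) = t ^+ 2 ->
    (b ^+ 2 - 1) * t ^+ 2 + (- b * (x + z - 2 * a)) * t + (x - a) * (z - a) = 0.
  by move=> e; rewrite -(subrr (t ^+ 2)) -{2}e; ring.
move=> /coef e1 /coef e2 /coef e3.
have [b2 mid ends] := quadratic_coef_eq0 n12 n13 n23 e1 e2 e3.
have b_neq0 : b != 0 by apply/eqP => b0; rewrite b0 in b2; lra.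
have center : x + z - 2 * a = 0.
  by move/eqP: mid; rewrite mulf_eq0 oppr_eq0 (negbTE b_neq0) => /eqP.
have : (x - z) ^+ 2 = 0.
  have -> : (x - z) ^+ 2 = (x + z - 2 * a) ^+ 2 - 4 * ((x - a) * (z - a)) by ring.
  by rewrite center ends; ring.
by move/eqP; rewrite sqrf_eq0 subr_eq0 (negbTE nxz).
Qed.

Lemma sym_eig_not_affine x z a b c d : z < x -> d != 0 \/ 0 <= c ->
  ~ (forall y, 0 <= c + d * y -> (x - (a + b * y)) * (z - (a + b * y)) = y ^+ 2).
Proof.
move=> zx cd roots.
have [t [t_inj t_ok]] :
    exists t : R -> R, injective t /\ forall i, 0 < i -> 0 <= c + d * t i.
  have [d0|d_neq0] := eqVneq d 0.
    exists id; split=> // i _; rewrite d0 mul0r addr0.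
    by case: cd => //; rewrite d0 eqxx.
  exists (fun i => (`|c| + i) / d); split.
    by move=> i j /(congr1 ( *%R^~ d)); rewrite !divfK //; apply: addrI.
  by move=> i i_gt0; rewrite mulrC divfK //; have := ler_norm (- c); rewrite normrN; lra.
have t_neq (i j : R) : i < j -> t i != t j by move=> ij; rewrite (inj_eq t_inj) lt_eqF.
by apply: (sym_eig_affine_roots (a := a) (b := b) (negbT (gt_eqF zx))
    (t_neq 1 2 _) (t_neq 1 3 _) (t_neq 2 3 _)); rewrite ?roots ?t_ok //; lra.
Qed.

Lemma sym_cand_roots x y z l r1 r2 : r1 + r2 = x + z -> r1 * r2 = x * z - y ^+ 2 ->
  sym_cand x y z l -> [\/ l = r1, l = r2, 2 * l = x + 2 * y + z | 2 * l = x - 2 * y + z].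
Proof.
move=> sum prod [quad|[_ [h|h]]]; [|by constructor 3|by constructor 4].
have : (l - r1) * (l - r2) = 0.
  have -> : (l - r1) * (l - r2) = l ^+ 2 - (r1 + r2) * l + r1 * r2 by ring.
  by rewrite sum prod -quad; ring.
by move/eqP; rewrite mulf_eq0 !subr_eq0 => /orP[/eqP|/eqP]; [constructor 1|constructor 2].
Qed.

(* For x > z no boundary value is admissible, so [(x ux + y uy + z uz) / 2]
   would be an eigenvalue of [[x, y], [y, z]] on a half-line of y's. *)
Lemma linear_cand_cond ux uy uz gx gy gz :
  (forall x y z, 0 <= x * gx + y * gy + z * gz ->
     sym_cand x y z ((x * ux + y * uy + z * uz) / 2)) ->
  [/\ gy = 0, gz = - gx & gx < 0].
Proof.
move=> cand.
have root x y z : z < x -> 0 <= x * gx + y * gy + z * gz ->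
    (x - ((x * ux + z * uz) / 2 + uy / 2 * y)) *
    (z - ((x * ux + z * uz) / 2 + uy / 2 * y)) = y ^+ 2.
  have -> : (x * ux + z * uz) / 2 + uy / 2 * y = (x * ux + y * uy + z * uz) / 2 by lra.
  by move=> zx /cand [//|[]]; lra.
have gy0 : gy = 0.
  have [//|gy_neq0] := eqVneq gy 0; exfalso.
  apply: (sym_eig_not_affine (a := (1 * ux + 0 * uz) / 2) (b := uy / 2) (c := gx)
    ltr01 (or_introl gy_neq0)) => y g.
  by apply: root => //; lra.
have gneg x z : z < x -> x * gx + z * gz < 0.
  move=> zx; rewrite ltNge; apply/negP => g.
  apply: (sym_eig_not_affine (a := (x * ux + z * uz) / 2) (b := uy / 2) (d := 0)
    zx (or_intror g)) => y _.
  by apply: root; rewrite ?gy0 //; lra.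
have gx_lt0 : gx < 0 by have := gneg 1 0 ltr01; lra.
split=> //; have [/eqP|s_neq0] := eqVneq (gx + gz) 0.
  by rewrite addrC addr_eq0 => /eqP.
have := gneg (- gx / (gx + gz) + 1) (- gx / (gx + gz)) ltac:(lra).
by rewrite mulrDl mul1r addrAC -mulrDr divfK //; lra.
Qed.

Lemma linear_cand_value ux uy uz :
  (forall x y z, x < z -> sym_cand x y z ((x * ux + y * uy + z * uz) / 2)) ->
  [/\ ux = 1, uz = 1 & uy = 2 \/ uy = -2].
Proof.
move=> cand.
have at_pt x y z r1 r2 : x < z -> r1 + r2 = x + z -> r1 * r2 = x * z - y ^+ 2 ->
    let l := (x * ux + y * uy + z * uz) / 2 in
    [\/ l = r1, l = r2, 2 * l = x + 2 * y + z | 2 * l = x - 2 * y + z].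
  by move=> xz sum prod; apply: sym_cand_roots sum prod (cand _ _ _ xz).
have [uz1 uy2] : uz = 1 /\ (uy = 2 \/ uy = -2).
  have := at_pt 0 0 1 0 1 ltr01 ltac:(lra) ltac:(lra).
  have := at_pt 0 (2 / 3) 1 (4 / 3) (-1 / 3) ltr01 ltac:(lra) ltac:(lra).
  have := at_pt 0 (3 / 8) 1 (9 / 8) (-1 / 8) ltr01 ltac:(lra) ltac:(lra).
  by move=> /= [?|?|?|?] [?|?|?|?] [?|?|?|?]; lra.
split=> //.
have := at_pt (-1) 0 0 (-1) 0 ltac:(lra) ltac:(lra) ltac:(lra).
have := at_pt (-1) 0 1 (-1) 1 ltac:(lra) ltac:(lra) ltac:(lra).
by move=> /= [?|?|?|?] [?|?|?|?]; lra.
Qed.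

Lemma linear_cand ux uy uz gx gy gz :
  (forall x y z, 0 <= x * gx + y * gy + z * gz ->
     sym_cand x y z ((x * ux + y * uy + z * uz) / 2)) ->
  [/\ gy = 0, gz = - gx & gx < 0] /\ [/\ ux = 1, uz = 1 & uy = 2 \/ uy = -2].
Proof.
move=> cand; have [gy0 gzE gx_lt0] := linear_cand_cond cand; split=> //.
apply: linear_cand_value => x y z xz; apply: cand.
by rewrite gy0 gzE; nra.
Qed.
End LinearCandidates.

Section Preserver.
Set Implicit Arguments.
Unset Strict Implicit.
Variable R : realType.
Variables P S Q : 'M[R]_2.
Hypothesis pres : forall x y z,
  Lspectrum (x *: P + y *: S + z *: Q) = Lspectrum (mx2 x y y z).

Lemma Leig_pres x y z l :
  Leig (x *: P + y *: S + z *: Q) l <-> Leig (mx2 x y y z) l.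
Proof. by have := pres x y z; rewrite /Lspectrum => ->. Qed.

Lemma bil_comb x y z s t : bil (x *: P + y *: S + z *: Q) s t =
  x * bil P s t + y * bil S s t + z * bil Q s t.
Proof. by rewrite /bil !mxE /=; ring. Qed.

Lemma bil_ray_coef e : e = 1 \/ e = -1 ->
  [/\ bil S (- e) e = 0, bil Q (- e) e = - bil P (- e) e & bil P (- e) e < 0] /\
  [/\ bil P e e = 1, bil Q e e = 1 & bil S e e = 2 \/ bil S e e = -2].
Proof.
move=> he; apply: linear_cand => x y z g; apply/Leig_mx2_sym/Leig_pres.
by rewrite -!bil_comb; apply: Leig_ray; rewrite ?bil_comb.
Qed.

Let a := P ord_max ord_max.
Let c := P ord0 ord_max.

Lemma P_Q_shape : P = mx2 (1 - a) c (- c) a /\ Q = mx2 a (- c) c (1 - a).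
Proof.
have [[_ Q1 _] [P11 Q11 _]] := bil_ray_coef (or_introl erefl).
have [[_ Q2 _] [P22 Q22 _]] := bil_ray_coef (or_intror erefl).
move: Q1 P11 Q11 Q2 P22 Q22; rewrite /bil /a /c ?opprK => *.
by split; apply: mx2P; lra.
Qed.

Lemma Q_Leig1 : Leig Q 1.
Proof.
have -> : Q = 0 *: P + 0 *: S + 1 *: Q by rewrite !scale0r scale1r !add0r.
apply/Leig_pres; apply: (Leig_eigvec (v := col2 0 1)).
- apply/eqP => /(congr1 (fun v : 'cV[R]_2 => v ord_max ord0)).
  by rewrite !mxE /= => /eqP; rewrite oner_eq0.
- by rewrite /lorentz !mxE /= normr0.
- by apply/matrixP => i j; rewrite mulmx_col2 !mxE /=; case: (i == ord0); lra.
Qed.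

Lemma c_sqr : c ^+ 2 = a ^+ 2 - a.
Proof.
have [_ Q_eq] := P_Q_shape.
case/Leig_cases: Q_Leig1 => [|[e he [h _]]].
  by rewrite det2E Q_eq !mxE /= mulr1n mulr0n subr0; lra.
by move: h; rewrite Q_eq /bil !mxE /=; case: he => ->; lra.
Qed.

Lemma a_le0 : a <= 0.
Proof.
have [P_eq _] := P_Q_shape.
have [[_ _ neg1] _] := bil_ray_coef (or_introl erefl).
have [[_ _ neg2] _] := bil_ray_coef (or_intror erefl).
move: neg1 neg2; rewrite P_eq /bil !mxE /= opprK => neg1 neg2.
have := c_sqr; have := sqr_ge0 c; nra.
Qed.

Lemma S_shape : exists2 e, e = 1 \/ e = -1 & S = mx2 0 e e 0 \/ S = mx2 e 0 0 e.
Proof.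
have [[S1 _ _] [_ _ S11]] := bil_ray_coef (or_introl erefl).
have [[S2 _ _] [_ _ S22]] := bil_ray_coef (or_intror erefl).
move: S1 S2 S11 S22; rewrite /bil ?opprK => S1 S2 [S11|S11] [S22|S22].
- by exists 1; [left | right; apply: mx2P; lra].
- by exists 1; [left | left; apply: mx2P; lra].
- by exists (-1); [right | left; apply: mx2P; lra].
- by exists (-1); [right | right; apply: mx2P; lra].
Qed.

(* If S = e I, then phi [[0, 1], [1, 1]] = Q + e I has eigenvalues e, e + 1 and
   boundary values e + 1/2, none equal to the boundary value (1 - 2 e) / 2 of
   [[0, 1], [1, 1]]. *)
Lemma S_offdiag : exists2 e, e = 1 \/ e = -1 & S = mx2 0 e e 0.
Proof.
have [e he [->|S_eq]] := S_shape; first by exists e.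
have : Leig (0 *: P + 1 *: S + 1 *: Q) ((1 - 2 * e) / 2).
  apply/Leig_pres.
  have -> : (1 - 2 * e) / 2 = bil (mx2 0 1 1 1) (- e) (- e) / 2.
    by rewrite /bil !mxE /=; case: he => ->; lra.
  apply: Leig_ray; first by case: he => ->; [right | left]; rewrite ?opprK.
  by rewrite /bil !mxE /= opprK; case: he => ->; lra.
case/Leig_cases => [|[e' he' [h _]]].
  have [_ Q_eq] := P_Q_shape; have := c_sqr.
  rewrite det2E S_eq Q_eq !mxE /= mulr1n mulr0n !subr0.
  by case: he => ->; lra.
have [_ [_ Q1 _]] := bil_ray_coef he'.
move: h; rewrite bil_comb Q1 S_eq /bil !mxE /=.
by case: he' => ->; case: he => ->; lra.
Qed.

Lemma P_Q_param : exists a s, [/\ a <= 0, s = 1 \/ s = -1,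
  P = mx2 (1 - a) (- s * Num.sqrt (a ^+ 2 - a)) (s * Num.sqrt (a ^+ 2 - a)) a
  & Q = mx2 a (s * Num.sqrt (a ^+ 2 - a)) (- s * Num.sqrt (a ^+ 2 - a)) (1 - a)].
Proof.
have [P_eq Q_eq] := P_Q_shape.
have sqrtE : Num.sqrt (a ^+ 2 - a) = `|c| by rewrite -c_sqr sqrtr_sqr.
have [c_ge0|c_lt0] := lerP 0 c.
  exists a, (-1); rewrite sqrtE ger0_norm //; split; rewrite ?a_le0 //; first by right.
    by apply: etrans P_eq _; congr mx2; ring.
  by apply: etrans Q_eq _; congr mx2; ring.
exists a, 1; rewrite sqrtE ltr0_norm //; split; rewrite ?a_le0 //; first by left.
  by apply: etrans P_eq _; congr mx2; ring.
by apply: etrans Q_eq _; congr mx2; ring.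
Qed.

Lemma P_Q_sym : P^T = P -> P = mx2 1 0 0 0 /\ Q = mx2 0 0 0 1.
Proof.
have [P_eq Q_eq] := P_Q_shape.
move/(congr1 (fun B : 'M[R]_2 => B ord0 ord_max)); rewrite P_eq !mxE /= => c0.
have {}c0 : c = 0 by lra.
have a0 : a = 0.
  have := c_sqr; have := a_le0; rewrite c0; nra.
by rewrite Q_eq a0 c0 subr0 oppr0.
Qed.
End Preserver.

Theorem lemma4p3 (R : realType) (sym : bool) (phi : 'M[R]_2 -> 'M[R]_2)
  (phiW : forall A, inW sym A -> inW sym (phi A))
  (phi_lin : forall (c : R) A B, inW sym A -> inW sym B ->
      phi (c *: A + B) = c *: phi A + phi B)
  (phi_pres : forall A, inW sym A -> Lspectrum (phi A) = Lspectrum A) :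
  (exists a : R, exists s : R, [/\ a <= 0, s = 1 \/ s = -1,
     phi (@E R ord0 ord0) =
       mx2 (1 - a) (- s * Num.sqrt (a ^+ 2 - a)) (s * Num.sqrt (a ^+ 2 - a)) a
   & phi (@E R ord_max ord_max) =
       mx2 a (s * Num.sqrt (a ^+ 2 - a)) (- s * Num.sqrt (a ^+ 2 - a)) (1 - a)])
  /\ (exists m r t : R, (t = 1 \/ t = -1) /\
       phi (@E R ord0 ord_max + @E R ord_max ord0) = mx2 m r (- r + t * 2) (- m))
  /\ (sym ->
       [/\ phi (@E R ord0 ord0) = @E R ord0 ord0,
           phi (@E R ord_max ord_max) = @E R ord_max ord_max
         & exists m r : R, (r = 1 \/ r = -1) /\
             phi (@E R ord0 ord_max + @E R ord_max ord0) = mx2 m r r (- m)]).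
Proof.
rewrite E11_mx2 E22_mx2 E12_E21_mx2.
set P := phi (mx2 1 0 0 0); set S := phi (mx2 0 1 1 0); set Q := phi (mx2 0 0 0 1).
have pres x y z : Lspectrum (x *: P + y *: S + z *: Q) = Lspectrum (mx2 x y y z).
  by rewrite -(linear_mx2_sym phi_lin) phi_pres //; exact: inW_mx2.
have [e he S_eq] := S_offdiag pres.
split; [exact: P_Q_param pres | split].
  by exists 0, e, e; split=> //; rewrite S_eq; congr mx2; ring.
move=> hsym; have [-> ->] := P_Q_sym pres (phiW _ (inW_mx2 1 0 0) hsym).
by split=> //; exists 0, e; split=> //; rewrite S_eq oppr0.
Qed.
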